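(* Let $\mathcal{H}$ be a right quaternionic Hilbert space and $x_1,\dots,x_n\in\mathcal{H}$ unit vectors. Then for each $m\in\mathbb{N}$ there exist unit vectors $x_{1,m},\dots,x_{n,m}\in\mathbb{H}^n$ such that $\langle x_{i,m},x_{j,m}\rangle=\langle x_i,x_j\rangle\,|\langle x_i,x_j\rangle|^{2m}$ for all $i,j$.
   Context: A right quaternionic Hilbert space is a right $\mathbb{H}$-vector space with inner product satisfying $\langle y,x\rangle=\overline{\langle x,y\rangle}$, $\langle xa+yb,z\rangle=\bar a\langle x,z\rangle+\bar b\langle y,z\rangle$, $\langle z,xa+yb\rangle=\langle z,x\rangle a+\langle z,y\rangle b$, $\langle x,x\rangle>0$ for $x\ne0$. $\mathbb{H}^n$ carries $\langle x,y\rangle=\sum_k\bar x_ky_k$. *)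

From HB Require Import structures.
From mathcomp Require Import all_boot all_order all_algebra.
From mathcomp Require Import reals.
Set Implicit Arguments. Unset Strict Implicit. Unset Printing Implicit Defensive.
Import Order.TTheory GRing.Theory Num.Theory.
Local Open Scope ring_scope.

Section Quat.
Variable R : realType.

(* q = q0 + q1 i + q2 j + q3 k *)
Record quat := Quat { q0 : R; q1 : R; q2 : R; q3 : R }.

Definition qreal (r : R) : quat := Quat r 0 0 0.
Definition qzero : quat := qreal 0.
Definition qone : quat := qreal 1.
Definition qadd (p q : quat) : quat :=
  Quat (q0 p + q0 q) (q1 p + q1 q) (q2 p + q2 q) (q3 p + q3 q).
Definition qopp (p : quat) : quat := Quat (- q0 p) (- q1 p) (- q2 p) (- q3 p).
Definition qmul (p q : quat) : quat :=
  Quat (q0 p * q0 q - q1 p * q1 q - q2 p * q2 q - q3 p * q3 q)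
       (q0 p * q1 q + q1 p * q0 q + q2 p * q3 q - q3 p * q2 q)
       (q0 p * q2 q - q1 p * q3 q + q2 p * q0 q + q3 p * q1 q)
       (q0 p * q3 q + q1 p * q2 q - q2 p * q1 q + q3 p * q0 q).
Definition qconj (p : quat) : quat := Quat (q0 p) (- q1 p) (- q2 p) (- q3 p).
Definition qabs (p : quat) : R :=
  Num.sqrt (q0 p ^+ 2 + q1 p ^+ 2 + q2 p ^+ 2 + q3 p ^+ 2).
Definition qpos (p : quat) : Prop :=
  [/\ 0 < q0 p, q1 p = 0, q2 p = 0 & q3 p = 0].

Record QHilbert := {
  hcar :> Type;
  hadd : hcar -> hcar -> hcar;
  hzero : hcar;
  hopp : hcar -> hcar;
  hscale : hcar -> quat -> hcar;
  hip : hcar -> hcar -> quat;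
  haddA : forall x y z, hadd x (hadd y z) = hadd (hadd x y) z;
  haddC : forall x y, hadd x y = hadd y x;
  hadd0 : forall x, hadd x hzero = x;
  haddN : forall x, hadd x (hopp x) = hzero;
  hscaleM : forall x a b, hscale x (qmul a b) = hscale (hscale x a) b;
  hscale1 : forall x, hscale x qone = x;
  hscaleDv : forall x y a, hscale (hadd x y) a = hadd (hscale x a) (hscale y a);
  hscaleDs : forall x a b, hscale x (qadd a b) = hadd (hscale x a) (hscale x b);
  hip_conj : forall x y, hip y x = qconj (hip x y);
  hip_linl : forall x y z a b,
    hip (hadd (hscale x a) (hscale y b)) z
    = qadd (qmul (qconj a) (hip x z)) (qmul (qconj b) (hip y z));
  hip_linr : forall x y z a b,
    hip z (hadd (hscale x a) (hscale y b))
    = qadd (qmul (hip z x) a) (qmul (hip z y) b);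
  hip_pos : forall x, x <> hzero -> qpos (hip x x);
  hcomplete : forall u : nat -> hcar,
    (forall e : R, 0 < e -> exists N : nat, forall p q : nat, (N <= p)%N -> (N <= q)%N ->
        Num.sqrt (q0 (hip (hadd (u p) (hopp (u q))) (hadd (u p) (hopp (u q))))) < e) ->
    exists l : hcar, forall e : R, 0 < e -> exists N : nat, forall p : nat, (N <= p)%N ->
        Num.sqrt (q0 (hip (hadd (u p) (hopp l)) (hadd (u p) (hopp l)))) < e
}.

Definition hnorm (H : QHilbert) (x : H) : R := Num.sqrt (q0 (hip x x)).

Definition qvec (n : nat) := 'I_n -> quat.
Definition qvec_ip (n : nat) (x y : qvec n) : quat :=
  \big[qadd/qzero]_(k < n) qmul (qconj (x k)) (y k).
Definition qvec_norm (n : nat) (x : qvec n) : R := Num.sqrt (q0 (qvec_ip x x)).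

End Quat.

(* Gram–Schmidt works in any quaternionic inner product space, so the Gram
   matrix G of x_1, ..., x_n is the Gram matrix of some family in H^n.  Call
   such matrices realizable.  If A and B are realizable, by w_i and y_i, then so
   is the entrywise product of A with |B|^2: the number |<y_i, y_j>|^2 is the
   Euclidean inner product of the real coordinate vectors of the outer products
   (y_il conj(y_ik))_(l,k), and tensoring w_i with these real vectors (real
   scalars are central in H) gives a family with Gram matrix A |B|^2 in a
   larger H^N, which Gram–Schmidt brings back to H^n.  Starting from A = B = G
   and iterating m times realizes G |G|^(2m), whose diagonal is 1. *)

From HB Require Import structures.
From mathcomp Require Import all_boot all_order all_algebra.
From mathcomp Require Import reals ring.
From Stdlib Require Import Classical FunctionalExtensionality.
Import Order.TTheory GRing.Theory Num.Theory.
Local Open Scope ring_scope.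
Set Implicit Arguments. Unset Strict Implicit.

Section QuatRing.
Variable R : realType.
Implicit Types (p q : quat R) (a b : R).

Definition quat_tuple q := (q0 q, q1 q, q2 q, q3 q).
Definition tuple_quat (t : R * R * R * R) : quat R :=
  let '(a, b, c, d) := t in Quat a b c d.
Lemma quat_tupleK : cancel quat_tuple tuple_quat. Proof. by case. Qed.
HB.instance Definition _ := Choice.copy (quat R) (can_type quat_tupleK).

Ltac quat_ring :=
  repeat case=> ????; cbn; unfold qadd, qopp, qmul, qconj, qreal, qzero, qone; cbn;
  try congr Quat; ring.

Lemma qaddA : associative (@qadd R). Proof. quat_ring. Qed.
Lemma qaddC : commutative (@qadd R). Proof. quat_ring. Qed.
Lemma qadd0r : left_id (qzero R) (@qadd R). Proof. quat_ring. Qed.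
Lemma qaddNr : left_inverse (qzero R) (@qopp R) (@qadd R). Proof. quat_ring. Qed.
HB.instance Definition _ := GRing.isZmodule.Build (quat R) qaddA qaddC qadd0r qaddNr.

Lemma qmulA : associative (@qmul R). Proof. quat_ring. Qed.
Lemma qmul1r : left_id (qone R) (@qmul R). Proof. quat_ring. Qed.
Lemma qmulr1 : right_id (qone R) (@qmul R). Proof. quat_ring. Qed.
Lemma qmulDl : left_distributive (@qmul R) (@qadd R). Proof. quat_ring. Qed.
Lemma qmulDr : right_distributive (@qmul R) (@qadd R). Proof. quat_ring. Qed.
Lemma qone_neq0 : qone R != 0. Proof. by apply/eqP => -[/eqP]; rewrite oner_eq0. Qed.
HB.instance Definition _ :=
  GRing.Zmodule_isNzRing.Build (quat R) qmulA qmul1r qmulr1 qmulDl qmulDr qone_neq0.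

Lemma qreal_is_zmod_morphism : zmod_morphism (@qreal R).
Proof. by move=> a b; quat_ring. Qed.
HB.instance Definition _ :=
  GRing.isZmodMorphism.Build R (quat R) (@qreal R) qreal_is_zmod_morphism.
Lemma qreal_is_monoid_morphism : monoid_morphism (@qreal R).
Proof. by split=> [|a b]; quat_ring. Qed.
HB.instance Definition _ :=
  GRing.isMonoidMorphism.Build R (quat R) (@qreal R) qreal_is_monoid_morphism.

Lemma qconj_is_zmod_morphism : zmod_morphism (@qconj R). Proof. quat_ring. Qed.
HB.instance Definition _ :=
  GRing.isZmodMorphism.Build (quat R) (quat R) (@qconj R) qconj_is_zmod_morphism.

Lemma q0_is_zmod_morphism : zmod_morphism (@q0 R). Proof. by do 2!case=> ????. Qed.
HB.instance Definition _ :=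
  GRing.isZmodMorphism.Build (quat R) R (@q0 R) q0_is_zmod_morphism.

Lemma qaddE p q : qadd p q = p + q. Proof. by []. Qed.
Lemma qmulE p q : qmul p q = p * q. Proof. by []. Qed.

Lemma qconj_sum I r (P : pred I) (F : I -> quat R) :
  qconj (\sum_(i <- r | P i) F i) = \sum_(i <- r | P i) qconj (F i).
Proof. exact: raddf_sum. Qed.
Lemma q0_sum I r (P : pred I) (F : I -> quat R) :
  q0 (\sum_(i <- r | P i) F i) = \sum_(i <- r | P i) q0 (F i).
Proof. exact: raddf_sum. Qed.

Lemma qconjM p q : qconj (p * q) = qconj q * qconj p. Proof. move: p q; quat_ring. Qed.
Lemma qconjK : involutive (@qconj R). Proof. quat_ring. Qed.
Lemma qconj_real a : qconj (qreal a) = qreal a. Proof. quat_ring. Qed.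
Lemma qconj1 : qconj 1 = 1 :> quat R. Proof. exact: qconj_real. Qed.
Lemma qreal_mulC a p : qreal a * p = p * qreal a. Proof. move: p; quat_ring. Qed.
Lemma q0_mulC p q : q0 (p * q) = q0 (q * p). Proof. move: p q; quat_ring. Qed.

Definition qnorm2 q := q0 q ^+ 2 + q1 q ^+ 2 + q2 q ^+ 2 + q3 q ^+ 2.

Lemma qnorm2_ge0 q : 0 <= qnorm2 q.
Proof. by rewrite !addr_ge0 ?sqr_ge0. Qed.

Lemma qabs_sqr q : qabs q ^+ 2 = qnorm2 q.
Proof. exact: sqr_sqrtr (qnorm2_ge0 q). Qed.

Lemma qabs1 : qabs (1 : quat R) = 1.
Proof. by rewrite /qabs /= expr1n !expr0n /= !addr0 sqrtr1. Qed.

Lemma qconj_mul q : qconj q * q = qreal (qnorm2 q).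
Proof. by rewrite /qnorm2; move: q; quat_ring. Qed.

Lemma qnorm2_gt0 q : q != 0 -> 0 < qnorm2 q.
Proof.
move=> q_neq0; rewrite lt_def qnorm2_ge0 andbT.
apply: contra q_neq0; rewrite !paddr_eq0 ?addr_ge0 ?sqr_ge0 // !sqrf_eq0.
by case: q => a b c d /= /andP[/andP[/andP[/eqP-> /eqP->] /eqP->] /eqP->].
Qed.

Lemma qpos_real q : qpos q -> q = qreal (q0 q).
Proof. by case: q => ????[/= _ -> -> ->]. Qed.

Definition qcoord q (c : 'I_4) : R := nth 0 [:: q0 q; q1 q; q2 q; q3 q] c.

Lemma q0_mul_qconj p q : q0 (p * qconj q) = \sum_c qcoord p c * qcoord q c.
Proof. rewrite !big_ord_recr big_ord0 /= /qcoord /= add0r; move: p q; quat_ring. Qed.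

Definition gram_realizable n (G : 'I_n -> 'I_n -> quat R) :=
  exists y : 'I_n -> qvec R n, forall i j, qvec_ip (y i) (y j) = G i j.

End QuatRing.

Section GramSchmidt.
Variables (R : realType) (T : Type) (add : T -> T -> T) (zero : T).
Variables (scale : T -> quat R -> T) (ip : T -> T -> quat R).
Hypothesis ipDl : forall x y z, ip (add x y) z = ip x z + ip y z.
Hypothesis ipZl : forall x a z, ip (scale x a) z = qconj a * ip x z.
Hypothesis ip_sym : forall x y, ip y x = qconj (ip x y).
Hypothesis ip0l : forall z, ip zero z = 0.
Hypothesis ip_pos : forall x, x <> zero -> qpos (ip x x).

Lemma ip_suml I (r : seq I) (P : pred I) (F : I -> T) z :
  ip (\big[add/zero]_(i <- r | P i) F i) z = \sum_(i <- r | P i) ip (F i) z.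
Proof. exact: (big_morph (ip^~ z) (fun x y => ipDl x y z) (ip0l z)). Qed.

(* A vanishing residual is kept as a null vector, so that the k-th vector of the
   orthonormal system always comes from the k-th input vector. *)
Definition unit_or_null x := (forall z, ip x z = 0) \/ ip x x = 1.

Definition orthonormal k (e : nat -> T) :=
  (forall l, (l < k)%N -> unit_or_null (e l)) /\
  (forall l l', (l < k)%N -> (l' < k)%N -> l != l' -> ip (e l) (e l') = 0).

Definition parseval k (e : nat -> T) v :=
  forall z, ip v z = \sum_(l < k) ip v (e l) * ip (e l) z.

Lemma parseval_orth k e v x :
  parseval k e v -> (forall l, (l < k)%N -> ip (e l) x = 0) -> ip v x = 0.
Proof. by move=> ve ex; rewrite ve big1 // => l _; rewrite ex ?mulr0. Qed.

Definition residual k (e : nat -> T) v :=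
  add v (scale (\big[add/zero]_(l < k) scale (e l) (ip (e l) v)) (-1)).

Lemma ip_residual k e v z :
  ip (residual k e v) z = ip v z - \sum_(l < k) ip v (e l) * ip (e l) z.
Proof.
rewrite ipDl ipZl raddfN /= qconj1 mulN1r ip_suml.
by congr (_ - _); apply: eq_bigr => l _; rewrite ipZl -ip_sym.
Qed.

Lemma residual_orth k e v l :
  orthonormal k e -> (l < k)%N -> ip (residual k e v) (e l) = 0.
Proof.
move=> [e_unit e_orth] lk; rewrite ip_residual (bigD1 (Ordinal lk)) //= big1.
  case: (e_unit l lk) => [e_null|->]; last by rewrite mulr1 addr0 subrr.
  by rewrite ip_sym !e_null raddf0 mulr0 addr0 subrr.
by move=> l' l'l; rewrite e_orth ?mulr0.
Qed.

Definition normalize x := scale x (qreal (Num.sqrt (q0 (ip x x)))^-1).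

Lemma ip_normalizel x z :
  ip (normalize x) z = qreal (Num.sqrt (q0 (ip x x)))^-1 * ip x z.
Proof. by rewrite ipZl qconj_real. Qed.

Lemma ip_normalizer x z :
  ip z (normalize x) = ip z x * qreal (Num.sqrt (q0 (ip x x)))^-1.
Proof. by rewrite ip_sym ip_normalizel qconjM qconj_real -ip_sym. Qed.

Lemma normalize_unit_or_null x : unit_or_null (normalize x).
Proof.
have [-> | x_neq0] := classic (x = zero).
  by left => z; rewrite ip_normalizel !ip0l mulr0.
have x_pos := ip_pos x_neq0; have xx_gt0 : 0 < q0 (ip x x) by case: x_pos.
right; rewrite ip_normalizel ip_normalizer (qpos_real x_pos) -!rmorphM /=.
by rewrite mulrCA -expr2 exprVn sqr_sqrtr ?ltW // mulfV ?gt_eqF.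
Qed.

Lemma normalize_parseval x z : ip x z = ip x (normalize x) * ip (normalize x) z.
Proof.
have [-> | x_neq0] := classic (x = zero); first by rewrite !ip0l mul0r.
have x_pos := ip_pos x_neq0; have xx_gt0 : 0 < q0 (ip x x) by case: x_pos.
rewrite ip_normalizel ip_normalizer (qpos_real x_pos) mulrA -!rmorphM /=.
by rewrite -mulrA -expr2 exprVn sqr_sqrtr ?ltW // mulfV ?gt_eqF // rmorph1 mul1r.
Qed.

Definition extend (e : nat -> T) k x l := if l == k then x else e l.

Lemma sum_extend k e x (F : T -> quat R) :
  \sum_(l < k.+1) F (extend e k x l) = \sum_(l < k) F (e l) + F x.
Proof.
rewrite big_ord_recr /= /extend eqxx; congr (_ + _).
by apply: eq_bigr => l _; rewrite ltn_eqF.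
Qed.

Lemma orthonormal_extend k e x :
  orthonormal k e -> unit_or_null x -> (forall l, (l < k)%N -> ip x (e l) = 0) ->
  orthonormal k.+1 (extend e k x).
Proof.
move=> [e_unit e_orth] x_unit xe; rewrite /extend; split=> [l|l l'].
  rewrite ltnS leq_eqVlt => /predU1P[->|lk]; first by rewrite eqxx.
  by rewrite ltn_eqF //; apply: e_unit.
rewrite ltnS leq_eqVlt => /predU1P[->|lk]; rewrite ltnS leq_eqVlt => /predU1P[->|l'k].
- by rewrite eqxx.
- by rewrite eqxx (ltn_eqF l'k) => _; apply: xe.
- by rewrite eqxx (ltn_eqF lk) => _; rewrite ip_sym xe // raddf0.
- by rewrite (ltn_eqF lk) (ltn_eqF l'k); apply: e_orth.
Qed.

Lemma parseval_extend k e v x :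
  parseval k e v -> ip v x = 0 -> parseval k.+1 (extend e k x) v.
Proof.
move=> ve vx z; rewrite (sum_extend _ _ _ (fun y => ip v y * ip y z)) /=.
by rewrite vx mul0r addr0 ve.
Qed.

Theorem gram_schmidt k (v : nat -> T) :
  exists e, orthonormal k e /\ forall i, (i < k)%N -> parseval k e (v i).
Proof.
elim: k => [|k [e [e_orth ve]]]; first by exists (fun=> zero).
pose x := normalize (residual k e (v k)).
have xe l : (l < k)%N -> ip x (e l) = 0.
  by move=> lk; rewrite ip_normalizel residual_orth ?mulr0.
have ex l : (l < k)%N -> ip (e l) x = 0 by move=> lk; rewrite ip_sym xe ?raddf0.
exists (extend e k x); split.
  exact: orthonormal_extend (normalize_unit_or_null _) xe.
move=> i; rewrite ltnS leq_eqVlt => /predU1P[->|ik]; last first.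
  exact: parseval_extend (ve i ik) (parseval_orth (ve i ik) ex).
have vx : ip (residual k e (v k)) x = ip (v k) x.
  by rewrite ip_residual big1 ?subr0 // => l _; rewrite ex ?mulr0.
move=> z; rewrite (sum_extend _ _ _ (fun y => ip (v k) y * ip y z)) /=.
by rewrite -vx -normalize_parseval ip_residual addrC subrK.
Qed.

Lemma gram_realizable_ip n (v : 'I_n -> T) :
  gram_realizable (fun i j => ip (v i) (v j)).
Proof.
case: n v => [|n] v; first by exists (fun _ _ => 0) => -[].
have [e [_ ve]] := gram_schmidt n.+1 (fun l => v (inord l)).
exists (fun i l => ip (e l) (v i)) => i j.
have := ve i (ltn_ord i) (v j); rewrite !inord_val => ->.
by apply: eq_bigr => l _; rewrite -ip_sym.
Qed.

End GramSchmidt.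

Section HilbertSpace.
Variables (R : realType) (H : QHilbert R).
Implicit Types x y z : H.

Lemma hipDl x y z : hip (hadd x y) z = hip x z + hip y z.
Proof.
have := hip_linl x y z (qone R) (qone R); rewrite !hscale1 => ->.
by rewrite qaddE !qmulE qconj1 !mul1r.
Qed.

Lemma hscale0 x : hscale x (qzero R) = hzero H.
Proof.
have x00 := hscaleDs x (qzero R) (qzero R); rewrite qaddE addr0 in x00.
by rewrite -(haddN (hscale x (qzero R))) {2}x00 -haddA haddN hadd0.
Qed.

Lemma hipZl x a z : hip (hscale x a) z = qconj a * hip x z.
Proof.
have := hip_linl x x z a (qzero R); rewrite hscale0 hadd0 => ->.
by rewrite qaddE !qmulE raddf0 mul0r addr0.
Qed.

Lemma hip0l z : hip (hzero H) z = 0.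
Proof. by rewrite -(hscale0 (hzero H)) hipZl raddf0 mul0r. Qed.

Lemma hip_unit x : hnorm x = 1 -> hip x x = 1.
Proof.
move=> x1; have x_neq0 : x <> hzero H.
  by move=> x0; move: x1; rewrite /hnorm x0 hip0l sqrtr0 => /eqP; rewrite eq_sym oner_eq0.
have x_pos := hip_pos x_neq0; have xx_ge0 : 0 <= q0 (hip x x) by case: x_pos => /ltW.
by rewrite (qpos_real x_pos) -(sqr_sqrtr xx_ge0) -/(hnorm x) x1 expr1n rmorph1.
Qed.

End HilbertSpace.

Section FunctionSpace.
Variables (R : realType) (I : finType).
Implicit Types x y z : I -> quat R.

Definition fip x y := \sum_k qconj (x k) * y k.

Lemma fipDl x y z : fip (fun k => x k + y k) z = fip x z + fip y z.
Proof. by rewrite /fip -big_split; apply: eq_bigr => k _; rewrite raddfD mulrDl. Qed.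

Lemma fipZl x a z : fip (fun k => x k * a) z = qconj a * fip x z.
Proof. by rewrite /fip mulr_sumr; apply: eq_bigr => k _; rewrite qconjM mulrA. Qed.

Lemma fip_sym x y : fip y x = qconj (fip x y).
Proof. by rewrite /fip qconj_sum; apply: eq_bigr => k _; rewrite qconjM qconjK. Qed.

Lemma fip0l z : fip (fun=> 0) z = 0.
Proof. by rewrite /fip big1 // => k _; rewrite raddf0 mul0r. Qed.

Lemma fip_pos x : x <> (fun=> 0) -> qpos (fip x x).
Proof.
move=> x_neq0; have [k xk_neq0 | x0] := pickP (fun k => x k != 0); last first.
  by case: x_neq0; apply: functional_extensionality => k; apply/eqP/negbFE/x0.
rewrite /fip (eq_bigr _ (fun k _ => qconj_mul (x k))) -rmorph_sum; split=> //=.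
by rewrite (bigD1 k) //= ltr_wpDr ?qnorm2_gt0 // sumr_ge0 // => j _; apply: qnorm2_ge0.
Qed.

End FunctionSpace.

Section SchurProduct.
Variable R : realType.

Definition qtensor (I J : finType) (w : I -> quat R) (u : J -> R) (p : I * J) :=
  w p.1 * qreal (u p.2).

Lemma fip_qtensor (I J : finType) (w w' : I -> quat R) (u u' : J -> R) :
  fip (qtensor w u) (qtensor w' u') = fip w w' * qreal (\sum_b u b * u' b).
Proof.
rewrite /fip /qtensor.
rewrite -(pair_bigA _ (fun a b => qconj (w a * qreal (u b)) * (w' a * qreal (u' b)))).
rewrite rmorph_sum mulr_suml; apply: eq_bigr => a _ /=.
rewrite mulr_sumr; apply: eq_bigr => b _.
rewrite qconjM qconj_real rmorphM qreal_mulC -!mulrA; congr (_ * _).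
by rewrite mulrA qreal_mulC -mulrA.
Qed.

Definition outer_coords (I : finType) (y : I -> quat R) (p : I * I * 'I_4) :=
  qcoord (y p.1.1 * qconj (y p.1.2)) p.2.

Lemma outer_coords_dot (I : finType) (y z : I -> quat R) :
  \sum_p outer_coords y p * outer_coords z p = qnorm2 (fip y z).
Proof.
rewrite /outer_coords -(pair_bigA _ (fun lk c =>
  qcoord (y lk.1 * qconj (y lk.2)) c * qcoord (z lk.1 * qconj (z lk.2)) c)).
under eq_bigr do rewrite -q0_mul_qconj.
rewrite -(pair_bigA _ (fun l k => q0 (y l * qconj (y k) * qconj (z l * qconj (z k))))).
rewrite -[qnorm2 _]/(q0 (qreal (qnorm2 (fip y z)))) -qconj_mul -fip_sym /fip.
rewrite mulr_suml q0_sum; apply: eq_bigr => l _.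
rewrite mulr_sumr q0_sum; apply: eq_bigr => k _.
by rewrite qconjM qconjK mulrA q0_mulC !mulrA.
Qed.

Lemma gram_realizable_mul_sqr_abs n (A B : 'I_n -> 'I_n -> quat R) :
  gram_realizable A -> gram_realizable B ->
  gram_realizable (fun i j => A i j * qreal (qabs (B i j) ^+ 2)).
Proof.
move=> [w wA] [y yB].
pose t i := qtensor (w i) (outer_coords (y i)).
have [tt ttE] := gram_realizable_ip (@fipDl R _) (@fipZl R _) (@fip_sym R _)
  (@fip0l R _) (@fip_pos R _) t.
exists tt => i j; rewrite ttE fip_qtensor outer_coords_dot.
by rewrite qabs_sqr -wA -yB.
Qed.

End SchurProduct.

Unset Implicit Arguments.

Theorem mainTheorem15 (R : realType) (H : QHilbert R) (n : nat) (x : 'I_n -> H)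
  (hx : forall i, hnorm (x i) = 1) :
  forall m : nat, exists xm : 'I_n -> qvec R n,
    (forall i, qvec_norm (xm i) = 1) /\
    (forall i j, qvec_ip (xm i) (xm j)
                 = qmul (hip (x i) (x j)) (qreal (qabs (hip (x i) (x j)) ^+ (2 * m)))).
Proof.
move=> m; pose G i j := hip (x i) (x j).
have G_realizable : gram_realizable G.
  exact: (gram_realizable_ip (@hipDl R H) (@hipZl R H) (@hip_conj R H) (@hip0l R H)
    (@hip_pos R H)).
have [xm xmE] : gram_realizable (fun i j => G i j * qreal (qabs (G i j) ^+ (2 * m))).
  elim: m => [|m IH].
    by have [y yG] := G_realizable; exists y => i j; rewrite yG muln0 expr0 rmorph1 mulr1.
  have [z zE] := gram_realizable_mul_sqr_abs IH G_realizable.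
  by exists z => i j; rewrite zE -mulrA -rmorphM -exprD addnC -mulnS.
exists xm; split=> [i|//].
by rewrite /qvec_norm xmE /G hip_unit // qabs1 expr1n rmorph1 mulr1 sqrtr1.
Qed.
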